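(* Let $V$ be a finite set of variables, let $x,y,a,b\in V$ with $x\ne y$, $a\ne b$, let $\mathbf Z\subseteq V\setminus\{x,y\}$, $\mathbf X\subseteq V\setminus\{a,b\}$, let $\sigma\in\{\text{preferred},\text{stable}\}$, and let $D^{xy\mathbf Z}_{\mathit{csl}}$ be the extended causal ABA framework defined in the context. For every $S\in\sigma(D^{xy\mathbf Z}_{\mathit{csl}})$: $(a\perp\!\!\!\perp b\mid\mathbf X)\in S$ if and only if $a$ and $b$ are d-separated given $\mathbf X$ in $G(S)=(V,\{(u,v)\mid\mathit{arr}_{uv}\in S\})$.
   Context: ABA. An ABA framework is $D=(\mathcal L,\mathcal R,\mathcal A,\overline{\cdot})$ with sentences $\mathcal L$, rules $a_0\leftarrow a_1,\dots,a_n$ ($n\ge0$), assumptions $\mathcal A\subseteq\mathcal L$ and contrary function $\overline{\cdot}:\mathcal A\to\mathcal L$. $S\vdash q$ ($S\subseteq\mathcal A$) if there is a finite rooted labelled tree with root $q$, set of leaf labels $S$ or $S\cup\{\top\}$, and every inner node labelled by the head of a rule whose children are labelled by the distinct body elements (one child $\top$ for an empty body). $S$ attacks $T$ if some $S'\subseteq S$ derives $\overline a$ for some $a\in T$. $S$ is closed if $S\vdash a$ with $a\in\mathcal A$ implies $a\in S$. Conflict-free: does not attack itself; $S$ defends $T$ if it attacks every attacker of $T$; admissible: conflict-free and self-defending; complete: admissible and contains every assumption set it defends; preferred: $\subseteq$-maximal complete; stable: admissible and attacks $\{a\}$ for every assumption $a\notin S$. Since the framework below is non-flat, extensions are required to be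 closed. Graphs. A path is a sequence of distinct nodes with consecutive nodes adjacent; an inner node $x_i$ of $x_1\dots x_n$ is a collider if $(x_{i-1},x_i)$ and $(x_{i+1},x_i)$ are edges; descendants are nodes reachable by directed paths. For $\mathbf Z\subseteq V\setminus\{x,y\}$, an $x$-$y$-path is $\mathbf Z$-active if every collider on it is in $\mathbf Z$ or has a descendant in $\mathbf Z$ and every other node on it is not in $\mathbf Z$; $x,y$ are d-separated given $\mathbf Z$ if no $\mathbf Z$-active $x$-$y$-path exists. An $x$-$y$-collider-tree of a DAG $H$ is a subgraph $t$ of $H$ with an $x$-$y$-path $p_t$ in $t$ such that every node of $t$ not on $p_t$ is a descendant of a collider of $p_t$; it is $\mathbf Z$-active if $p_t$ is $\mathbf Z$-active in $(V,\text{edges of }t)$. By an $x$-$y$-path over $V$ (without reference to a graph) we mean a sequence of distinct variables from $x$ to $y$. The framework $D_{\mathit{ds}}$. Assumptions: $\mathit{arr}_{uv}$ for all ordered pairs of distinct $u,v\in V$; one $\mathit{noe}_{uv}=\mathit{noe}_{vu}$ per unordered pair; independence assumptions $(u\perp\!\!\!\perp v\mid\mathbf W)$ for $\mathbf W\subseteq V$, distinct $u,v\in V\setminus\mathbf W$ (symmetric in $u,v$). Each assumption $a$ has its own distinct fresh contrary $\overline a$. Rules: (i) $\overline a\leftarrow b$ for distinct $a,b\in\{\mathit{arr}_{uv},\mathit{arr}_{vu},\mathit{noe}_{uv}\}$; (ii) for every sequence $x_1\dots x_k$ with consecutive elements distinct and $x_1=x_k$ and every $1\le i<k$: $\overline{\mathit{arr}_{x_ix_{i+1}}}\leftarrow\mathit{arr}_{x_1x_2},\dots,\mathit{arr}_{x_{k-1}x_k}$;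 (iii) $\mathit{dpath}_{uv}\leftarrow\mathit{arr}_{uv}$; $\mathit{dpath}_{uw}\leftarrow\mathit{dpath}_{uv},\mathit{arr}_{vw}$; $e_{uv}\leftarrow\mathit{arr}_{uv}$; $e_{uv}\leftarrow\mathit{arr}_{vu}$; $\overline{\mathit{noe}_{uv}}\leftarrow e_{uv}$; (iv) for all distinct $u,v$, $\mathbf W\subseteq V\setminus\{u,v\}$ and every $\mathbf W$-active $u$-$v$-collider-tree $t$ (of any DAG on $V$), $\overline{(u\perp\!\!\!\perp v\mid\mathbf W)}\leftarrow\{\mathit{arr}_{st}\mid(s,t)\text{ an edge of }t\}$. The framework $D^{xy\mathbf Z}_{\mathit{csl}}$. Its assumptions are those of $D_{\mathit{ds}}$ together with assumptions $\mathit{bp}_{p\mid\mathbf W}$ for every $u$-$v$-path $p$ over $V$ and every $\mathbf W\subseteq V\setminus\{u,v\}$, with contrary $\overline{\mathit{bp}_{p\mid\mathbf W}}=\mathit{ap}_{p\mid\mathbf W}$. Its rules are those of $D_{\mathit{ds}}$ plus: (a) $(x\perp\!\!\!\perp y\mid\mathbf Z)\leftarrow\mathit{bp}_{p_1\mid\mathbf Z},\dots,\mathit{bp}_{p_k\mid\mathbf Z}$ where $p_1,\dots,p_k$ are all $x$-$y$-paths over $V$; (b) for every $\mathbf Z$-active $x$-$y$-collider-tree $t$ (of any DAG on $V$) with underlying path $p_t$, the rule $\mathit{ap}_{p_t\mid\mathbf Z}\leftarrow\{\mathit{arr}_{st}\mid(s,t)\text{ an edge of }t\}$; (c) the fact $\overline{(x\perp\!\!\!\perp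 y\mid\mathbf Z)}\leftarrow$ (empty body). *)

From mathcomp Require Import all_boot.
Set Implicit Arguments. Unset Strict Implicit. Unset Printing Implicit Defensive.

(* Generic ABA frameworks.  Sentences: a type L; sets of sentences are  *)
(* predicates L -> Prop.  A rule is a head together with its body,     *)
(* given as a set of sentences (all bodies used below are finite).     *)
Record ABA (L : Type) := mkABA {
  rule : L -> (L -> Prop) -> Prop;
  asm : L -> Prop;
  contrary : L -> L }.

Section ABASemantics.
Variables (L : Type) (D : ABA L).

Definition subsetP (S T : L -> Prop) := forall q, S q -> T q.
Definition asm_set (S : L -> Prop) := subsetP S (asm D).

(* derives S q  <=>  some S' ⊆ S has a finite derivation tree of q whose  *)
(* leaves are labelled by S' (or by S' ∪ {⊤}).                           *)
Inductive derives (S : L -> Prop) : L -> Prop :=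
| der_leaf q : S q -> derives S q
| der_rule q (B : L -> Prop) : rule D q B -> (forall b, B b -> derives S b) -> derives S q.

Definition attacks (S T : L -> Prop) := exists a, T a /\ derives S (contrary D a).
Definition closed (S : L -> Prop) := forall a, asm D a -> derives S a -> S a.
Definition conflict_free (S : L -> Prop) := ~ attacks S S.
Definition defends (S T : L -> Prop) :=
  forall U, asm_set U -> attacks U T -> attacks S U.
Definition admissible (S : L -> Prop) :=
  asm_set S /\ conflict_free S /\ defends S S.
Definition complete (S : L -> Prop) :=
  closed S /\ admissible S /\ (forall T, asm_set T -> defends S T -> subsetP T S).
Definition preferred (S : L -> Prop) :=
  complete S /\ (forall S', complete S' -> subsetP S S' -> subsetP S' S).
Definition stable (S : L -> Prop) :=
  closed S /\ admissible S /\
  (forall a, asm D a -> ~ S a -> attacks S (fun q => q = a)).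
End ABASemantics.

Inductive semantics := Preferred | Stable.
Definition extension (L : Type) (D : ABA L) (sg : semantics) (S : L -> Prop) :=
  match sg with Preferred => preferred D S | Stable => stable D S end.

Section Graphs.
Variable V : finType.
Implicit Types (E : V -> V -> Prop) (p : seq V) (Z : {set V}).

Inductive reach E : V -> V -> Prop :=
| reach_refl u : reach E u u
| reach_step u v w : E u v -> reach E v w -> reach E u w.

Definition path_over (x y : V) p := exists q, p = x :: q /\ last x q = y /\ uniq p.

Fixpoint adj_chain E p : Prop :=
  match p with
  | u :: ((v :: _) as q) => (E u v \/ E v u) /\ adj_chain E q
  | _ => True
  end.

Definition gpath E (x y : V) p := path_over x y p /\ adj_chain E p.

Definition collider E p (i : nat) (d : V) :=
  (0 < i < (size p).-1)%N /\ E (nth d p i.-1) (nth d p i) /\ E (nth d p i.+1) (nth d p i).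

Definition active E Z p (d : V) :=
  forall i, (i < size p)%N ->
    (collider E p i d ->
       (nth d p i \in Z \/ exists w, reach E (nth d p i) w /\ w \in Z)) /\
    (~ collider E p i d -> nth d p i \notin Z).

Definition dsep E (x y : V) Z := ~ exists p, gpath E x y p /\ active E Z p x.

(* x-y-collider-tree t (edge relation Et) with underlying path p, t being a
   subgraph of some DAG on V (equivalently, t itself is acyclic). *)
Definition collider_tree (Et : V -> V -> Prop) (x y : V) p :=
  (forall u v, Et u v -> ~ reach Et v u) /\
  gpath Et x y p /\
  (forall u v, Et u v -> forall w, (w = u \/ w = v) -> w \notin p ->
     exists i, collider Et p i x /\ reach Et (nth x p i) w).

Definition active_ctree (Et : V -> V -> Prop) (x y : V) p Z :=
  collider_tree Et x y p /\ active Et Z p x.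
End Graphs.

(* Noe s and Ind s W take the unordered pair s = [set u; v].           *)
Inductive sent (V : finType) :=
| Arr (u v : V)
| Noe (s : {set V})
| Ind (s : {set V}) (W : {set V})
| Bp (p : seq V) (W : {set V})
| Ap (p : seq V) (W : {set V})
| Dpath (u v : V)
| Edge (u v : V)
| Ctr (a : sent V).

Section Frameworks.
Variable V : finType.

Definition noe (u v : V) := Noe [set u; v].
Definition indep (u v : V) (W : {set V}) := Ind [set u; v] W.

Definition arrows (Et : V -> V -> Prop) : sent V -> Prop :=
  fun s => exists u v, Et u v /\ s = Arr u v.

Inductive ds_rule : sent V -> (sent V -> Prop) -> Prop :=
| r_i1 u v : u != v -> ds_rule (Ctr (Arr u v)) (fun s => s = Arr v u)
| r_i2 u v : u != v -> ds_rule (Ctr (Arr u v)) (fun s => s = noe u v)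
| r_i3 u v : u != v -> ds_rule (Ctr (noe u v)) (fun s => s = Arr u v)
(* (ii): x1 :: q = x_1 ... x_k, consecutive distinct, x_1 = x_k *)
| r_ii (x1 : V) (q : seq V) (i : nat) :
    path (fun a b => a != b) x1 q -> last x1 q = x1 -> (i < size q)%N ->
    ds_rule (Ctr (Arr (nth x1 (x1 :: q) i) (nth x1 (x1 :: q) i.+1)))
            (fun s => exists2 j, (j < size q)%N &
                        s = Arr (nth x1 (x1 :: q) j) (nth x1 (x1 :: q) j.+1))
| r_dp1 u v : ds_rule (Dpath u v) (fun s => s = Arr u v)
| r_dp2 u v w : ds_rule (Dpath u w) (fun s => s = Dpath u v \/ s = Arr v w)
| r_e1 u v : ds_rule (Edge u v) (fun s => s = Arr u v)
| r_e2 u v : ds_rule (Edge u v) (fun s => s = Arr v u)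
| r_noe u v : ds_rule (Ctr (noe u v)) (fun s => s = Edge u v)
| r_iv u v (W : {set V}) (Et : V -> V -> Prop) (p : seq V) :
    u != v -> u \notin W -> v \notin W -> active_ctree Et u v p W ->
    ds_rule (Ctr (indep u v W)) (arrows Et).

Definition ds_asm (s : sent V) : Prop :=
  (exists u v, u != v /\ s = Arr u v) \/
  (exists u v, u != v /\ s = noe u v) \/
  (exists u v (W : {set V}), [/\ u != v, u \notin W, v \notin W & s = indep u v W]).

Definition D_ds : ABA (sent V) := mkABA ds_rule ds_asm (@Ctr V).

Section Csl.
Variables (x y : V) (Z : {set V}).

Inductive csl_rule : sent V -> (sent V -> Prop) -> Prop :=
| c_ds h B : ds_rule h B -> csl_rule h B
| c_a : csl_rule (indep x y Z) (fun s => exists2 p, path_over x y p & s = Bp p Z)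
| c_b (Et : V -> V -> Prop) (p : seq V) :
    active_ctree Et x y p Z -> csl_rule (Ap p Z) (arrows Et)
| c_c : csl_rule (Ctr (indep x y Z)) (fun _ => False).

Definition csl_asm (s : sent V) : Prop :=
  ds_asm s \/
  (exists u v (p : seq V) (W : {set V}), [/\ u != v, path_over u v p, u \notin W, v \notin W & s = Bp p W]).

Definition csl_contrary (s : sent V) : sent V :=
  match s with Bp p W => Ap p W | _ => Ctr s end.

Definition D_csl : ABA (sent V) := mkABA csl_rule csl_asm csl_contrary.
End Csl.

Definition G_of (S : sent V -> Prop) : V -> V -> Prop := fun u v => S (Arr u v).
End Frameworks.

(** Rule (ii) makes the arrows of a directed cycle attack each other, so
    G(S) is acyclic for every conflict-free S, and in an acyclic graph active
    paths and active collider trees determine each other.  Hence S attacks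
    itself through rule (iv) if it contains (a _||_ b | X) while a and b are
    d-connected in G(S).

    Conversely, suppose S attacks every assumption it does not contain.  An
    attack on (a _||_ b | X) is either an instance of rule (iv), i.e. an
    active a-b collider tree in G(S), or the fact (c) for (x,y,Z).  In the
    latter case S lacks some bp_p (otherwise rule (a) and closedness would
    put the attacked (x _||_ y | Z) into S), and the attack on bp_p is an
    active x-y collider tree in G(S) by rule (b).

    Stable extensions attack everything outside by definition.  For a
    preferred S, completeness shows that S cannot defend all bp_p, so some
    attacker contains an active x-y collider tree T whose arrows S does not
    attack.  Then G = G(S) + T is acyclic, and the assumptions not attacked
    by the arrows and the non-adjacent pairs of G form a complete extension
    containing S; by maximality it is S, which therefore attacks everything
    outside. *)

From Pilot Require Import Defs.
From mathcomp Require Import all_boot zify.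
From Stdlib Require Import Classical.
Set Implicit Arguments. Unset Strict Implicit. Unset Printing Implicit Defensive.

Section Derivations.
Variables (L : Type) (D : ABA L).
Implicit Types (S T : L -> Prop) (P : L -> Prop) (q : L).

Definition attacks_outside S :=
  forall a, asm D a -> ~ S a -> derives D S (contrary D a).

Lemma stable_attacks_outside S : stable D S -> attacks_outside S.
Proof. by move=> [_ [_ stabS]] a Aa nSa; have [_ [-> dS]] := stabS a Aa nSa. Qed.

Lemma derives_inv S q : derives D S q ->
  S q \/ exists2 B, rule D q B & forall b, B b -> derives D S b.
Proof. by case=> [Sq|q' B r dB]; [left|right; exists B]. Qed.

Lemma derives_sub S T q : (forall s, S s -> T s) -> derives D S q -> derives D T q.
Proof.
move=> sST; elim=> [q' /sST|q' B r _ IH]; first exact: der_leaf.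
exact: der_rule r IH.
Qed.

Lemma derives_leaf S q : (forall B, ~ rule D q B) -> derives D S q -> S q.
Proof. by move=> norule /derives_inv [//|[B /norule]]. Qed.

Lemma derives_rule1 S q b : rule D q (fun s => s = b) -> S b -> derives D S q.
Proof. by move=> r Sb; apply: (der_rule r) => _ ->; apply: der_leaf. Qed.

Lemma derives_restrict P S T q :
  (forall h B b, rule D h B -> ~ P h -> B b -> ~ P b) ->
  (forall s, S s -> ~ P s -> T s) -> derives D S q -> ~ P q -> derives D T q.
Proof.
move=> bodyP sST; elim=> [q' Sq Pq|q' B r _ IH Pq]; first exact/der_leaf/sST.
apply: (der_rule r) => b Bb; exact: IH Bb (bodyP _ _ _ r Pq Bb).
Qed.
End Derivations.

Section Reachability.
Variable V : finType.
Implicit Types (E F : V -> V -> Prop) (q : seq V).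

Lemma reach_trans E u v w : reach E u v -> reach E v w -> reach E u w.
Proof. by elim=> // a b c Eab _ IH /IH; apply: reach_step. Qed.

Lemma reach_stepr E u v w : reach E u v -> E v w -> reach E u w.
Proof. by move=> Ruv Evw; apply: reach_trans Ruv (reach_step Evw (reach_refl _ _)). Qed.

Lemma reach_sub E F u v : (forall a b, E a b -> F a b) -> reach E u v -> reach F u v.
Proof. by move=> sEF; elim=> [a|a b c /sEF Fab _]; [apply: reach_refl|apply: reach_step]. Qed.

Definition acyclic E := forall u v, E u v -> ~ reach E v u.

Lemma acyclic_neq E u v : acyclic E -> E u v -> u != v.
Proof.
by move=> acE Euv; apply/eqP=> eq_uv; apply: (acE _ _ Euv); rewrite eq_uv; apply: reach_refl.
Qed.

Lemma acyclic_antisym E u v : acyclic E -> E u v -> ~ E v u.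
Proof. by move=> acE Euv Evu; apply: (acE _ _ Euv); apply: reach_step Evu (reach_refl _ _). Qed.

Lemma acyclic_sub E F : (forall u v, E u v -> F u v) -> acyclic F -> acyclic E.
Proof. by move=> sEF acF u v /sEF Fuv /(reach_sub sEF); apply: acF. Qed.

Definition walk E (d : V) v q :=
  forall j, j < size q -> E (nth d (v :: q) j) (nth d q j).

Lemma reach_walk E d u v : reach E u v -> exists q, last u q = v /\ walk E d u q.
Proof.
elim=> [a|a b c Eab _ [q [<- Wq]]]; first by exists [::]; split=> // j.
by exists (b :: q); split=> // -[|j] /= lt_j; [apply: Eab|apply: Wq].
Qed.

Lemma walk_reach E d v q j k : walk E d v q -> j <= k <= size q ->
  reach E (nth d (v :: q) j) (nth d (v :: q) k).
Proof.
move=> Wq; elim: k => [|k IH] /andP[le_jk le_k].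
  by move: le_jk; rewrite leqn0 => /eqP ->; apply: reach_refl.
case: (ltngtP j k.+1) le_jk => // [lt_jk _|-> _]; last exact: reach_refl.
by apply: reach_stepr (IH _) (Wq k le_k); rewrite -ltnS lt_jk ltnW.
Qed.

Lemma walk_reach_last E d v q : walk E d v q -> reach E v (last v q).
Proof.
move=> /walk_reach Wq; have := Wq 0 (size q) (leqnn _).
by rewrite -[size q]/((size (v :: q)).-1) nth_last.
Qed.

Lemma walk_reach_cycle E d v q i : walk E d v q -> last v q = v -> i < size q ->
  reach E (nth d q i) (nth d (v :: q) i).
Proof.
move=> Wq q_last lt_i.
have to_v : reach E (nth d (v :: q) i.+1) (nth d (v :: q) (size q)).
  by apply: walk_reach; rewrite ?lt_i ?leqnn.
rewrite -[size q]/((size (v :: q)).-1) nth_last /= q_last in to_v.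
by apply: reach_trans to_v (walk_reach (j := 0) Wq _); apply: ltnW.
Qed.
End Reachability.

Section PathReversal.
Variable V : finType.
Implicit Types (E : V -> V -> Prop) (p : seq V) (Z : {set V}).

Lemma adj_chainP E d p : adj_chain E p <-> forall j, j.+1 < size p ->
  E (nth d p j) (nth d p j.+1) \/ E (nth d p j.+1) (nth d p j).
Proof.
elim: p => [|u [|v r] IH] /=; [by split=> // _ []|by split=> // _ []|].
split=> [[Euv /IH Ar] [|j] lt_j //|A]; first exact: Ar.
by split; [apply: (A 0)|apply/IH => j; apply: (A j.+1)].
Qed.

Lemma collider_default E p i d d' : collider E p i d -> collider E p i d'.
Proof.
move=> [lt_i [E1 E2]]; split=> //.
by rewrite !(set_nth_default d d') //; lia.
Qed.

Lemma active_default E Z p d d' : active E Z p d -> active E Z p d'.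
Proof.
move=> Ap i lt_i; have [A1 A2] := Ap i lt_i.
rewrite (set_nth_default d d' lt_i); split=> [/(collider_default d) //|nC].
by apply: A2 => /(collider_default d').
Qed.

Lemma path_over_rev (a b : V) p : path_over a b p -> path_over b a (rev p).
Proof.
move=> [[|c r] [-> [/= last_b Up]]]; first by rewrite -last_b; exists [::].
have rev_p : rev (a :: c :: r) = b :: rcons (rev (belast c r)) a.
  by rewrite rev_cons [c :: r]lastI last_b rev_rcons.
exists (rcons (rev (belast c r)) a); rewrite last_rcons -rev_p rev_uniq.
by split.
Qed.

Lemma adj_chain_rev E p : adj_chain E p -> adj_chain E (rev p).
Proof.
case: p => [//|d p0]; set p := d :: p0 => /(adj_chainP _ d) A.
apply/(adj_chainP _ d) => j; rewrite size_rev => lt_j.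
rewrite !nth_rev; try lia.
have -> : size p - j.+1 = (size p - j.+2).+1 by lia.
by have [] := A (size p - j.+2); [lia|right|left].
Qed.

Lemma collider_rev E p i d : collider E (rev p) i d -> collider E p (size p - i.+1) d.
Proof.
rewrite /collider size_rev => -[lt_i]; rewrite !nth_rev; try lia.
have -> : (size p - i.+1).-1 = size p - i.+2 by lia.
have -> : (size p - i.+1).+1 = size p - i.-1.+1 by lia.
move=> [E1 E2]; split; [lia|by split].
Qed.

Lemma active_rev E Z p d : active E Z p d -> active E Z (rev p) d.
Proof.
move=> Ap i; rewrite size_rev => lt_i.
have lt_k : size p - i.+1 < size p by lia.
have [A1 A2] := Ap _ lt_k; rewrite nth_rev //; split=> [/collider_rev //|nC].
apply: A2 => C; apply: nC.
have := @collider_rev E (rev p) (size p - i.+1) d; rewrite revK size_rev.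
have -> : size p - (size p - i.+1).+1 = i by lia.
by apply.
Qed.

Lemma dsep_sym E (a b : V) Z : dsep E a b Z -> dsep E b a Z.
Proof.
move=> sep [p [[Po Ap] Act]]; apply: sep; exists (rev p).
split; first by split; [apply: path_over_rev|apply: adj_chain_rev].
exact: active_default (active_rev Act).
Qed.
End PathReversal.

Section ColliderTrees.
Variable V : finType.
Implicit Types (E F : V -> V -> Prop) (p : seq V) (W : {set V}).

Lemma collider_sub E F p i d :
  (forall u v, E u v -> F u v) -> collider E p i d -> collider F p i d.
Proof. by move=> sEF [lt_i [/sEF F1 /sEF F2]]. Qed.

Lemma collider_antisym_sub E F p i d : adj_chain E p ->
  (forall u v, E u v -> F u v) -> (forall u v, F u v -> ~ F v u) ->
  collider F p i d -> collider E p i d.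
Proof.
move=> /(adj_chainP _ d) Ap sEF antiF [lt_i [F1 F2]]; split=> //; split.
  have := Ap i.-1; have -> : i.-1.+1 = i by lia.
  by case=> [|//|/sEF /antiF /(_ F1) []]; lia.
by case: (Ap i) => [|/sEF /antiF /(_ F2) []|//]; lia.
Qed.

Lemma active_ctree_gpath E Et (a b : V) p W :
  (forall u v, Et u v -> E u v) -> (forall u v, E u v -> ~ E v u) ->
  active_ctree Et a b p W -> gpath E a b p /\ active E W p a.
Proof.
move=> sEt antiE [[_ [[Po Ap] _]] Act]; split.
  split=> //; apply/(adj_chainP _ a) => j lt_j.
  by have [] := (proj1 (adj_chainP _ a _) Ap) j lt_j => /sEt; [left|right].
move=> i lt_i; have [A1 A2] := Act i lt_i; split.
  move=> /(collider_antisym_sub Ap sEt antiE) /A1 [|[w [Rw Zw]]]; first by left.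
  by right; exists w; split=> //; apply: reach_sub Rw.
by move=> nC; apply: A2 => /(collider_sub sEt).
Qed.

Definition path_edge (d : V) p (u v : V) := exists2 j, j.+1 < size p &
  (u = nth d p j /\ v = nth d p j.+1) \/ (v = nth d p j /\ u = nth d p j.+1).

Definition ctree_of_path E (d : V) p (u v : V) := E u v /\
  (path_edge d p u v \/ exists i, collider E p i d /\ reach E (nth d p i) u).

Lemma ctree_of_path_sub E d p u v : ctree_of_path E d p u v -> E u v.
Proof. by case. Qed.

Lemma path_edge_mem d p u v : path_edge d p u v -> (u \in p) && (v \in p).
Proof. by case=> j lt_j [] [-> ->]; rewrite !mem_nth // ltnW. Qed.

Lemma adj_chain_ctree_of_path E d p : adj_chain E p -> adj_chain (ctree_of_path E d p) p.
Proof.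
move=> /(adj_chainP _ d) Ap; apply/(adj_chainP _ d) => j lt_j.
by case: (Ap j lt_j) => Ej; [left|right]; split=> //; left; exists j => //; [left|right].
Qed.

Lemma collider_ctree_of_path E d p i :
  collider E p i d -> collider (ctree_of_path E d p) p i d.
Proof.
move=> [lt_i [E1 E2]]; split=> //; split; split=> //; left.
  by exists i.-1; [lia|left; have -> : i.-1.+1 = i by lia].
by exists i; [lia|right].
Qed.

Lemma reach_ctree_of_path E d p i s t : collider E p i d ->
  reach E (nth d p i) s -> reach E s t -> reach (ctree_of_path E d p) s t.
Proof.
move=> Ci Rs Rst; elim: Rst Rs => [u _|u v w Euv _ IH Ru]; first exact: reach_refl.
apply: reach_step (IH (reach_stepr Ru Euv)).
by split=> //; right; exists i.
Qed.

Lemma gpath_active_ctree E (a b : V) p W : acyclic E ->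
  gpath E a b p -> active E W p a ->
  active_ctree (ctree_of_path E a p) a b p W /\
  (forall u v, ctree_of_path E a p u v -> E u v).
Proof.
move=> acycE [Po Ap] Act; split; last exact: ctree_of_path_sub.
have Ap' := adj_chain_ctree_of_path a Ap.
split; first split.
- exact: acyclic_sub (@ctree_of_path_sub E a p) acycE.
- split; first by split.
  move=> u v [Euv [/path_edge_mem /andP[pu pv]|[i [Ci Ru]]]] w.
    by case=> -> /negP.
  move=> uv_w _; exists i; split; first exact: collider_ctree_of_path.
  apply: reach_ctree_of_path Ci (reach_refl _ _) _.
  by case: uv_w => ->; [|apply: reach_stepr Euv].
move=> i lt_i; have [A1 A2] := Act i lt_i; split.
  move=> /(collider_sub (@ctree_of_path_sub E a p)) Ci.
  have [|[w [Rw Zw]]] := A1 Ci; first by left.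
  by right; exists w; split=> //; apply: reach_ctree_of_path Ci (reach_refl _ _) Rw.
by move=> nC; apply: A2 => /collider_ctree_of_path.
Qed.
End ColliderTrees.

Lemma set2_inj (T : finType) (u v u' v' : T) : [set u; v] = [set u'; v'] ->
  (u' = u /\ v' = v) \/ (u' = v /\ v' = u).
Proof.
move=> E.
have : u' \in [set u; v] by rewrite E !inE eqxx.
have : v' \in [set u; v] by rewrite E !inE eqxx orbT.
have : u \in [set u'; v'] by rewrite -E !inE eqxx.
have : v \in [set u'; v'] by rewrite -E !inE eqxx orbT.
rewrite !inE => /orP[] /eqP -> /orP[] /eqP E1 /orP[] /eqP E2 /orP[] /eqP E3; subst; auto.
Qed.

Section CslDerivations.
Variable V : finType.
Variables (x y : V) (Z : {set V}).
Notation D := (D_csl x y Z).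
Implicit Types (S : sent V -> Prop) (s h q : sent V) (u v : V) (p : seq V).

Definition leaf_only h := match h with Arr _ _ | Noe _ | Bp _ _ => True | _ => False end.

Lemma csl_rule_head h B : csl_rule x y Z h B -> ~ leaf_only h.
Proof. by case=> [h' B' r| |Et p _|] //=; case: r => * /=; case. Qed.

Lemma derives_leaf_only S q : leaf_only q -> derives D S q -> S q.
Proof. by move=> Lq; apply: derives_leaf => B /csl_rule_head. Qed.

Definition asm_shape s :=
  match s with Arr _ _ | Noe _ | Ind _ _ | Bp _ _ => True | _ => False end.

Lemma csl_asm_shape s : csl_asm s -> asm_shape s.
Proof.
by case=> [[[u [v [_ ->]]]|[[u [v [_ ->]]]|[u [v [W [_ _ _ ->]]]]]]|[u [v [p [W [_ _ _ _ ->]]]]]].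
Qed.

Lemma asm_arr_neq u v : csl_asm (Arr u v) -> u != v.
Proof.
by case=> [[[u' [v' [? [-> ->]]]]|[[? [? [_ //]]]|[? [? [? [_ _ _ //]]]]]]|
           [? [? [? [? [_ _ _ _ //]]]]]].
Qed.

Lemma asm_noe_pair (e : {set V}) : csl_asm (Noe e) -> exists u v, u != v /\ e = [set u; v].
Proof.
case=> [[[? [? [_ //]]]|[[u [v [? [->]]]]|[? [? [? [_ _ _ //]]]]]]|[? [? [? [? [_ _ _ _ //]]]]]].
by exists u, v.
Qed.

Lemma derives_arr S u v : derives D S (Arr u v) -> S (Arr u v).
Proof. exact: derives_leaf_only. Qed.

Lemma indep_asm (a b : V) (X : {set V}) :
  a != b -> a \notin X -> b \notin X -> csl_asm (indep a b X).
Proof. by move=> *; left; right; right; exists a, b, X. Qed.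

Lemma bp_asm (a b : V) p (X : {set V}) :
  a != b -> path_over a b p -> a \notin X -> b \notin X -> csl_asm (Bp p X).
Proof. by move=> *; right; exists a, b, p, X. Qed.

Lemma derives_ds_rule1 S q b : ds_rule q (fun s => s = b) -> S b -> derives D S q.
Proof. by move=> r; apply: (derives_rule1 (D := D) (c_ds x y Z r)). Qed.

Definition indep_or_bp s := match s with Ind _ _ | Bp _ _ => True | _ => False end.

Lemma csl_body_indep_or_bp h B b :
  csl_rule x y Z h B -> ~ indep_or_bp h -> B b -> ~ indep_or_bp b.
Proof.
case=> [h' B' r| |Et p _|] nh Bb; [|by case: nh|by case: Bb => ? [? [_ ->]]|by []].
by case: r Bb nh => [u v _ ->|u v _ ->|u v _ ->|x1 q i _ _ _ [j _ ->]|u v ->|u v w [->|->]|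
  u v ->|u v ->|u v ->|u v W Et p _ _ _ _ [? [? [_ ->]]]].
Qed.

Lemma contrary_not_indep_or_bp s : ~ indep_or_bp (csl_contrary s).
Proof. by case: s => * /=; case. Qed.

Lemma derives_edge S u v : asm_set D S -> derives D S (Edge u v) ->
  S (Arr u v) \/ S (Arr v u).
Proof.
move=> SA dE; case: (derives_inv dE) => [/SA/csl_asm_shape []|[B r dB]].
inversion r as [h B' r'| | |]; subst; inversion r'; subst.
  by left; exact: derives_arr (dB _ erefl).
by right; exact: derives_arr (dB _ erefl).
Qed.

Lemma derives_ctr_arr S u v : asm_set D S -> derives D S (Ctr (Arr u v)) ->
  [\/ S (Arr v u), S (noe u v) | S (Arr u v) /\ reach (G_of S) v u].
Proof.
move=> SA dE; case: (derives_inv dE) => [/SA/csl_asm_shape []|[B r dB]].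
inversion r as [h B' r'| | |]; subst.
inversion r' as [a b _|a b _|a b _|x1 q i _ q_last lt_i| | | | | |]; subst.
- by apply: Or31; exact: derives_arr (dB _ erefl).
- by apply: Or32; apply: derives_leaf_only (dB _ erefl).
have Wq : walk (G_of S) x1 x1 q.
  by move=> j lt_j; apply: derives_arr (dB _ _); exists j.
by apply: Or33; split; [apply: Wq|apply: walk_reach_cycle].
Qed.

Lemma derives_ctr_noe S (e : {set V}) : asm_set D S -> derives D S (Ctr (Noe e)) ->
  exists u v, e = [set u; v] /\ S (Arr u v).
Proof.
move=> SA dE; case: (derives_inv dE) => [/SA/csl_asm_shape []|[B r dB]].
inversion r as [h B' r'| | |]; subst.
inversion r' as [| |u v _| | | | | |u v|]; subst.
  by exists u, v; split=> //; apply: derives_arr (dB _ erefl).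
case: (derives_edge SA (dB _ erefl)) => Sa; first by exists u, v.
by exists v, u; rewrite setUC.
Qed.

Lemma derives_ctr_indep S (e W : {set V}) : asm_set D S -> derives D S (Ctr (Ind e W)) ->
  (exists u v Et p, [/\ e = [set u; v], active_ctree Et u v p W &
                        forall a c, Et a c -> S (Arr a c)]) \/
  (e = [set x; y] /\ W = Z).
Proof.
move=> SA dE; case: (derives_inv dE) => [/SA/csl_asm_shape []|[B r dB]].
inversion r as [h B' r'| | |]; subst; last by right.
inversion r' as [| | | | | | | | |u v W' Et p _ _ _ Act]; subst.
left; exists u, v, Et, p; split=> // a c Et_ac.
by apply: derives_arr; apply: dB; exists a, c.
Qed.

Lemma derives_ap S p : asm_set D S -> derives D S (Ap p Z) ->
  exists Et, active_ctree Et x y p Z /\ forall a c, Et a c -> S (Arr a c).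
Proof.
move=> SA dE; case: (derives_inv dE) => [/SA/csl_asm_shape []|[B r dB]].
inversion r as [h B' r'| |Et p' Act|]; subst; first by inversion r'.
exists Et; split=> // a c Et_ac.
by apply: derives_arr; apply: dB; exists a, c.
Qed.

Lemma derives_indep S (e W : {set V}) : derives D S (Ind e W) ->
  S (Ind e W) \/
  [/\ e = [set x; y], W = Z & forall p, path_over x y p -> S (Bp p Z)].
Proof.
move=> dE; case: (derives_inv dE) => [|[B r dB]]; first by left.
inversion r as [h B' r'| | |]; first by subst; inversion r'.
subst W B; right; split=> // p Po.
by apply: derives_leaf_only (dB (Bp p Z) _) => //; exists p.
Qed.

Lemma cycle_self_attack E u v : (forall a c, E a c -> a != c) -> E u v -> reach E v u ->
  exists F, [/\ forall a c, F a c -> E a c, F u v, reach F v u &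
               forall a c, F a c -> derives D (arrows F) (Ctr (Arr a c))].
Proof.
move=> irrE Euv /(reach_walk u) [q [q_last Wq]].
have Wvq : walk E u u (v :: q) by move=> [|j] lt_j //=; apply: Wq.
pose F a c := exists2 j, j < size (v :: q) &
  a = nth u (u :: v :: q) j /\ c = nth u (u :: v :: q) j.+1.
have F_step j : j < size (v :: q) -> F (nth u (u :: v :: q) j) (nth u (v :: q) j).
  by exists j.
exists F; split.
- by move=> a c [j lt_j [-> ->]]; apply: Wvq.
- exact: (F_step 0).
- by rewrite -q_last; apply: walk_reach_last => j lt_j; apply: (F_step j.+1).
move=> a c [i lt_i [-> ->]].
have cyc : path (fun a b => a != b) u (v :: q).
  by apply/(pathP u) => j lt_j; apply/irrE/Wvq.
apply: (der_rule (D := D) (c_ds x y Z (r_ii cyc q_last lt_i))) => b [j lt_j ->].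
by apply: der_leaf; exists (nth u (u :: v :: q) j), (nth u (v :: q) j); split; first exact: F_step.
Qed.

Lemma conflict_free_acyclic S : asm_set D S -> conflict_free D S -> acyclic (G_of S).
Proof.
move=> SA cfS u v Suv Rvu.
have irrS a c : G_of S a c -> a != c by move/SA/asm_arr_neq.
have [F [sFS Fuv _ dF]] := cycle_self_attack irrS Suv Rvu.
apply: cfS; exists (Arr u v); split=> //.
by apply: derives_sub (dF _ _ Fuv) => _ [a [c [/sFS Sac ->]]].
Qed.
End CslDerivations.

Section GraphExtension.
Variable V : finType.
Variables (x y : V) (Z : {set V}).
Notation D := (D_csl x y Z).
Implicit Types (s : sent V) (u v : V).
Variable G : V -> V -> Prop.
Hypothesis G_acyclic : acyclic G.
Hypothesis G_xy_ctree : exists Et p, active_ctree Et x y p Z /\ forall a c, Et a c -> G a c.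

Definition graph_asm s := (exists u v, G u v /\ s = Arr u v) \/
  (exists u v, [/\ u != v, ~ G u v, ~ G v u & s = noe u v]).

Definition graph_ext s := csl_asm s /\ ~ derives D graph_asm (csl_contrary s).

Lemma graph_asm_arr u v : graph_asm (Arr u v) -> G u v.
Proof. by case=> [[u' [v' [Guv [-> ->]]]]|[? [? [_ _ _ //]]]]. Qed.

Lemma graph_asm_asm : asm_set D graph_asm.
Proof.
move=> s [[u [v [Guv ->]]]|[u [v [uv _ _ ->]]]]; left.
  by left; exists u, v; rewrite (acyclic_neq G_acyclic).
by right; left; exists u, v.
Qed.

Lemma noe_not_G u v (e : {set V}) : graph_asm (Noe e) -> e = [set u; v] -> ~ G u v.
Proof.
case=> [[? [? [_ //]]]|[u' [v' [_ nG1 nG2 [->]]]]].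
by case/set2_inj=> -[-> ->].
Qed.

Lemma graph_asm_conflict_free s : graph_asm s -> ~ derives D graph_asm (csl_contrary s).
Proof.
case=> [[u [v [Guv ->]]]|[u [v [uv nGuv nGvu ->]]]] /= dE.
  case: (derives_ctr_arr graph_asm_asm dE) => [/graph_asm_arr Gvu|Nuv|[_ Rvu]].
  - exact: acyclic_antisym G_acyclic Guv Gvu.
  - exact: noe_not_G Nuv erefl Guv.
  - by apply: G_acyclic Guv _; apply: reach_sub Rvu => a c /graph_asm_arr.
have [u' [v' [e_uv /graph_asm_arr Guv']]] := derives_ctr_noe graph_asm_asm dE.
by case: (set2_inj e_uv) => -[eq_u eq_v]; move: Guv'; rewrite eq_u eq_v.
Qed.

Lemma graph_asm_attacks s : csl_asm s -> ~ indep_or_bp s -> ~ graph_asm s ->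
  derives D graph_asm (csl_contrary s).
Proof.
move=> As; case: s As (csl_asm_shape As) => // [u v|e] As _ _ nGs /=.
  have uv := asm_arr_neq As.
  have nGuv : ~ G u v by move=> Guv; apply: nGs; left; exists u, v.
  case: (classic (G v u)) => [Gvu|nGvu].
    by apply: derives_ds_rule1 (r_i1 uv) _; left; exists v, u.
  by apply: derives_ds_rule1 (r_i2 uv) _; right; exists u, v.
have [u [v [uv e_uv]]] := asm_noe_pair As; subst e.
case: (classic (G u v)) => [Guv|nGuv].
  by apply: derives_ds_rule1 (r_i3 uv) _; left; exists u, v.
case: (classic (G v u)) => [Gvu|nGvu]; last by exfalso; apply: nGs; right; exists u, v.
rewrite setUC; apply: derives_ds_rule1 (r_i3 _) _; first by rewrite eq_sym.
by left; exists v, u.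
Qed.

Lemma graph_asm_attacks_bp : exists p, path_over x y p /\ derives D graph_asm (Ap p Z).
Proof.
have [Et [p [Act sEtG]]] := G_xy_ctree.
exists p; split; first by case: Act => -[_ [[]]].
apply: (der_rule (D := D) (c_b Act)) => _ [a [c [Etac ->]]].
by apply: der_leaf; left; exists a, c; split; first exact: sEtG.
Qed.

Lemma graph_ext_graph_asm s : graph_ext s -> ~ indep_or_bp s -> graph_asm s.
Proof. by move=> [As nd] nIB; apply: NNPP => nGs; apply/nd/graph_asm_attacks. Qed.

Lemma graph_asm_ext s : graph_asm s -> graph_ext s.
Proof. by move=> Gs; split; [apply: graph_asm_asm|apply: graph_asm_conflict_free]. Qed.

Lemma derives_graph_ext_contrary s :
  derives D graph_ext (csl_contrary s) -> derives D graph_asm (csl_contrary s).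
Proof.
move=> dE; apply: (derives_restrict (D := D) (@csl_body_indep_or_bp _ x y Z) _ dE).
  exact: graph_ext_graph_asm.
exact: contrary_not_indep_or_bp.
Qed.

Lemma graph_ext_closed : Defs.closed D graph_ext.
Proof.
move=> a As dE; have := csl_asm_shape As.
case: a As dE => // [u v|e|e W|p W] As dE _; try exact: derives_leaf_only dE.
case: (derives_indep dE) => [//|[-> -> all_bp]].
have [p [Po dAp]] := graph_asm_attacks_bp.
by have [_ []] := all_bp p Po.
Qed.

Lemma graph_ext_complete : complete D graph_ext.
Proof.
split; first exact: graph_ext_closed.
split; [split; [by move=> s []|split]|].
- by move=> [a [[_ nd] /derives_graph_ext_contrary]].
- (* An attacker either contains an assumption outside graph_asm, which
     graph_asm attacks, or its attack is already an attack by graph_asm. *)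
  move=> U UA [a [[_ nd] dU]]; apply: NNPP => nU; apply: nd.
  apply: (derives_restrict (D := D) (@csl_body_indep_or_bp _ x y Z) _ dU) => [s Us nIB|].
    apply: NNPP => nGs; apply: nU; exists s; split=> //.
    apply: derives_sub (graph_asm_attacks (UA _ Us) nIB nGs) => s'.
    exact: graph_asm_ext.
  exact: contrary_not_indep_or_bp.
- move=> T TA defT a Ta; split; first exact: TA.
  move=> dG; have [e [/graph_asm_conflict_free Ge dE]] :=
    defT _ graph_asm_asm (ex_intro _ a (conj Ta dG)).
  exact/Ge/derives_graph_ext_contrary.
Qed.
End GraphExtension.

Section PreferredExtensions.
Variable V : finType.
Variables (x y : V) (Z : {set V}).
Notation D := (D_csl x y Z).
Implicit Types (S : sent V -> Prop) (s : sent V) (u v : V).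
Hypotheses (xy : x != y) (xZ : x \notin Z) (yZ : y \notin Z).

Definition xy_bps s := exists2 p, path_over x y p & s = Bp p Z.

Lemma exists_bp_notin S : Defs.closed D S -> conflict_free D S ->
  exists p, path_over x y p /\ ~ S (Bp p Z).
Proof.
move=> clS cfS; apply: NNPP => all_bp.
have S_xyZ : S (indep x y Z).
  apply: clS; first exact: indep_asm.
  apply: (der_rule (D := D) (c_a x y Z)) => _ [p Po ->]; apply: der_leaf.
  by apply: NNPP => nS; apply: all_bp; exists p.
by apply: cfS; exists (indep x y Z); split=> //; apply: (der_rule (D := D) (c_c x y Z)).
Qed.

Lemma complete_unattacked_ctree S : complete D S ->
  exists Et p, active_ctree Et x y p Z /\ forall u v, Et u v -> ~ derives D S (Ctr (Arr u v)).
Proof.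
move=> [clS [[SA [cfS _]] compS]]; apply: NNPP => no_ctree.
have [p [Po nS]] := exists_bp_notin clS cfS.
apply/nS/(compS xy_bps) => [_ [q Qo ->]|U UA [_ [[q Qo ->] dU]]|]; last by exists p.
  exact: bp_asm xy Qo xZ yZ.
apply: NNPP => nSU; have [Et [Act sEtU]] := derives_ap UA dU.
apply: no_ctree; exists Et, q; split=> // u v Etuv dS; apply: nSU.
by exists (Arr u v); split=> //; apply: sEtU.
Qed.

Definition graph_join (E F : V -> V -> Prop) u v := E u v \/ F u v.

Section UnattackedExtension.
Variables (S : sent V -> Prop) (Et : V -> V -> Prop).
Hypothesis admS : admissible D S.
Hypothesis Et_acyclic : acyclic Et.
Hypothesis Et_unattacked : forall u v, Et u v -> ~ derives D S (Ctr (Arr u v)).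

Let G := graph_join (G_of S) Et.

Lemma admissible_join_acyclic : acyclic G.
Proof.
have [SA [cfS defS]] := admS.
have irrG a c : G a c -> a != c.
  by case=> [/SA/asm_arr_neq //|/(acyclic_neq Et_acyclic)].
move=> u v Guv Rvu; have [F [sFG Fuv RFvu dF]] := cycle_self_attack x y Z irrG Guv Rvu.
case: (classic (exists a c, F a c /\ S (Arr a c))) => [[a [c [Fac Sac]]]|noS].
  have FA : asm_set D (arrows F).
    by move=> _ [a' [c' [/sFG Ga'c' ->]]]; left; left; exists a', c'; rewrite irrG.
  have [_ [[a' [c' [Fa'c' ->]]] dS]] := defS _ FA (ex_intro _ _ (conj Sac (dF _ _ Fac))).
  case: (sFG _ _ Fa'c') => [Sa'c'|/Et_unattacked //].
  by apply: cfS; exists (Arr a' c').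
have sFEt a c : F a c -> Et a c.
  by move=> Fac; case: (sFG _ _ Fac) => // Sac; case: noS; exists a, c.
by apply: Et_acyclic (sFEt _ _ Fuv) _; apply: reach_sub RFvu.
Qed.

Lemma admissible_sub_graph_ext s : S s -> graph_ext x y Z G s.
Proof.
have [SA [cfS defS]] := admS.
move=> Ss; split=> [|dG]; first exact: SA.
have [e [Ge dS]] :=
  defS _ (graph_asm_asm x y Z admissible_join_acyclic) (ex_intro _ s (conj Ss dG)).
case: Ge dS => [[u [v [[Suv|/Et_unattacked nS] ->]]]|[u [v [_ nGuv nGvu ->]]]] dS //.
  by apply: cfS; exists (Arr u v).
have [u' [v' [e_uv Su'v']]] := derives_ctr_noe SA dS.
by case: (set2_inj e_uv) => -[eq_u eq_v]; [apply: nGuv|apply: nGvu]; left;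
  rewrite -eq_u -eq_v.
Qed.
End UnattackedExtension.

Lemma preferred_attacks_outside S : preferred D S -> attacks_outside D S.
Proof.
move=> [compS maxS]; have [_ [admS _]] := compS.
have [Et [p [Act Et_unattacked]]] := complete_unattacked_ctree compS.
have Et_acyclic : acyclic Et by case: Act => -[].
set G := graph_join (G_of S) Et.
have G_acyclic := admissible_join_acyclic admS Et_acyclic Et_unattacked.
have G_xy_ctree : exists Et' p', active_ctree Et' x y p' Z /\ forall a c, Et' a c -> G a c.
  by exists Et, p; split=> // a c; right.
have ext_S := maxS _ (graph_ext_complete G_acyclic G_xy_ctree)
  (admissible_sub_graph_ext admS Et_acyclic Et_unattacked).
have asm_S s : graph_asm G s -> S s by move/(graph_asm_ext x y Z G_acyclic)/ext_S.
move=> a Aa nSa; apply: derives_sub asm_S _; apply: NNPP => nd.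
by apply/nSa/ext_S; split.
Qed.
End PreferredExtensions.

Section DSeparation.
Variable V : finType.
Variables (x y : V) (Z : {set V}).
Notation D := (D_csl x y Z).
Variables (S : sent V -> Prop) (a b : V) (X : {set V}).
Hypotheses (SA : asm_set D S) (cfS : conflict_free D S).
Hypotheses (ab : a != b) (aX : a \notin X) (bX : b \notin X).

Let G_acyclic := conflict_free_acyclic SA cfS.

Lemma indep_dsep : S (indep a b X) -> dsep (G_of S) a b X.
Proof.
move=> S_ab [p [gp Act]].
have [Act_t sEtS] := gpath_active_ctree G_acyclic gp Act.
apply: cfS; exists (indep a b X); split=> //.
apply: (der_rule (D := D) (c_ds x y Z (r_iv ab aX bX Act_t))) => _ [u [v [Etuv ->]]].
exact/der_leaf/sEtS.
Qed.

Lemma active_ctree_not_dsep Et u v p : active_ctree Et u v p X ->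
  (forall c d, Et c d -> S (Arr c d)) -> [set a; b] = [set u; v] -> ~ dsep (G_of S) a b X.
Proof.
move=> Act sEtS ab_uv sep.
have [gp Act_p] := active_ctree_gpath sEtS (fun u v => acyclic_antisym G_acyclic) Act.
case: (set2_inj ab_uv) => -[eq_u eq_v]; subst u v; first by apply: sep; exists p.
by apply: (dsep_sym sep); exists p.
Qed.

Hypotheses (xy : x != y) (xZ : x \notin Z) (yZ : y \notin Z).
Hypothesis clS : Defs.closed D S.
Hypothesis S_attacks : attacks_outside D S.

Lemma dsep_indep : dsep (G_of S) a b X -> S (indep a b X).
Proof.
move=> sep; apply: NNPP => nS.
case: (derives_ctr_indep SA (S_attacks (indep_asm ab aX bX) nS)).
  by move=> [u [v [Et [p [ab_uv Act sEtS]]]]]; apply: active_ctree_not_dsep Act sEtS ab_uv sep.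
move=> [ab_xy eq_X].
have [p [Po nSp]] := exists_bp_notin xy xZ yZ clS cfS.
have [Et [Act sEtS]] := derives_ap SA (S_attacks (bp_asm xy Po xZ yZ) nSp).
by rewrite -eq_X in Act; apply: active_ctree_not_dsep Act sEtS ab_xy sep.
Qed.
End DSeparation.

Unset Implicit Arguments.

Theorem proposition5 (V : finType) (x y a b : V) (Z X : {set V}) (sg : semantics) :
  x != y -> a != b ->
  x \notin Z -> y \notin Z -> a \notin X -> b \notin X ->
  forall S : sent V -> Prop,
    extension (D_csl x y Z) sg S ->
    (S (indep a b X) <-> dsep (G_of S) a b X).
Proof.
move=> xy ab xZ yZ aX bX S ext.
have [clS [SA [cfS _]]] : Defs.closed (D_csl x y Z) S /\ admissible (D_csl x y Z) S.
  by case: sg ext => [[[clS [admS _]] _]|[clS [admS _]]]; split.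
have S_attacks : attacks_outside (D_csl x y Z) S.
  by case: sg ext => [/(preferred_attacks_outside xy xZ yZ)|/stable_attacks_outside].
split; first exact: indep_dsep SA cfS ab aX bX.
exact: dsep_indep SA cfS ab aX bX xy xZ yZ clS S_attacks.
Qed.
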